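(* Assume (H1'). Let $\phi$ be an admissible policy and $Y$ a $\mathbb W_2$-valued random variable on $\Omega^0$. If $$\lim_{n\to\infty}\mathbb P^0\Big[\bigcap_{k=0}^{\infty}\bigcup_{l=0}^{n}\mathscr A_l(Y)\cap\theta^k\mathscr A_{l+k}(Y)\Big]=1,$$ then $(U^{[Y]}_n)_{n\ge0}$ converges with strong backwards coupling to a stationary sequence $(U\circ\theta^n)_{n}$, where $U$ is a $\mathbb W_2$-valued solution of $U\circ\theta=(U\odot_\phi(V^0,\Sigma^0))\odot_\phi(V^1,\Sigma^1)$, $\mathbb P^0$-a.s.
   Context: $G=(\mathcal V,\mathcal E)$ finite connected simple graph; $\mathcal S$ the set of lists of preferences (for each class a linear ordering of its neighbours); $\phi$ a matching policy with probability $\nu_\phi$ on $\mathcal S$; $\mathbb W=\{w\in\mathcal V^*:|w|_i|w|_j=0 \text{ whenever } i,j \text{ adjacent}\}$, $\mathbb W_2$ its words of even length; admissible $\phi$: a map $\odot_\phi:\mathbb W\times(\mathcal V\times\mathcal S)\to\mathbb W$, $w\odot_\phi(v,\sigma)=wv$ if no letter of $w$ is adjacent to $v$, else $w$ with one letter adjacent to $v$ (chosen by $\phi$) deleted. (H1'): the sequence $(V_{2n},\Sigma_{2n},V_{2n+1},\Sigma_{2n+1})_{n\in\mathbb Z}$ (classes and preference lists of arriving items) is stationary ergodic, with $V_{2n}\sim\mu^0$, $V_{2n+1}\sim\mu^1$, $\Sigma_m\sim\nu_\phi$, and $\mu=(\mu^0+\mu^1)/2$ has full support. Work on the canonical space $\Omega^0=(\mathcal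 V\times\mathcal S\times\mathcal V\times\mathcal S)^{\mathbb Z}$ with the law $\mathbb P^0$ of this sequence and the shift $\theta((\omega_n)_n)=(\omega_{n+1})_n$; $(V^0,\Sigma^0,V^1,\Sigma^1)$ is the $0$-coordinate projection. For a $\mathbb W_2$-valued r.v. $Y$: $U^{[Y]}_0=Y$, $U^{[Y]}_{n+1}=(U^{[Y]}_n\odot_\phi(V^0\circ\theta^n,\Sigma^0\circ\theta^n))\odot_\phi(V^1\circ\theta^n,\Sigma^1\circ\theta^n)$. $\mathscr A_n(Y)=\{U^{[Y]}_n=\emptyset\}$. $(U^{[Y]}_n)$ converges with strong backwards coupling to $(U\circ\theta^n)$ if a.s. there is $N^*$ with $U^{[Y]}_n\circ\theta^{-n}=U$ for all $n\ge N^*$. *)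

From HB Require Import structures.
From mathcomp Require Import all_boot all_order all_algebra.
From mathcomp Require Import all_classical all_reals all_analysis.
Set Implicit Arguments. Unset Strict Implicit. Unset Printing Implicit Defensive.
Import Order.TTheory GRing.Theory Num.Theory.
Local Open Scope classical_set_scope.
Local Open Scope ring_scope.

Section MatchingModel.
Variables (V : finType) (adj : rel V).

(* A list of preferences: for each class i, a linear ordering (duplicate-free
   enumeration) of the neighbours of i. *)
Definition pref_ok (s : {ffun V -> seq V}) : bool :=
  [forall i, perm_eq (s i) (enum (adj i))].

Definition Prefs := {s : {ffun V -> seq V} | pref_ok s}.

Lemma pref0_ok : pref_ok [ffun i => enum (adj i)].
Proof. by apply/forallP => i; rewrite ffunE perm_refl. Qed.

Definition pref0 : Prefs := exist (fun s => is_true (pref_ok s)) _ pref0_ok.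

Definition inW (w : seq V) : Prop :=
  forall i j, adj i j -> count_mem i w = 0%N \/ count_mem j w = 0%N.

Definition inW2 (w : seq V) : Prop := inW w /\ ~~ odd (size w).

Definition admissible (odot : seq V -> V * Prefs -> seq V) : Prop :=
  forall (w : seq V) (v : V) (s : Prefs), inW w ->
    (~~ has (adj v) w -> odot w (v, s) = rcons w v) /\
    (has (adj v) w -> exists2 k, (k < size w)%N &
        adj v (nth v w k) /\ odot w (v, s) = take k w ++ drop k.+1 w).

(* one arrival pair (V_{2n}, Sigma_{2n}, V_{2n+1}, Sigma_{2n+1}) *)
Definition Arr := ((V * Prefs) * (V * Prefs))%type.

Variable v0 : V. (* the graph is nonempty; used only to make the space pointed *)

Definition Omega0T (x : V) : Type := int -> Arr.
Let Omega0 := Omega0T v0.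
HB.instance Definition _ := Choice.on (Omega0T v0).
HB.instance Definition _ := isPointed.Build (Omega0T v0) (fun _ => ((v0, pref0), (v0, pref0))).

Definition cyl : set (set (Omega0T v0)) :=
  [set A | exists (n : int) (x : Arr), A = [set om : Omega0T v0 | om n = x]].

Definition Omega := g_sigma_algebraType cyl.

Definition theta (om : Omega) : Omega := fun k => om (k + 1).
Definition thetainv (om : Omega) : Omega := fun k => om (k - 1).
Definition thetan (n : nat) : Omega -> Omega := iter n theta.
Definition thetainvn (n : nat) : Omega -> Omega := iter n thetainv.

Definition V0 (om : Omega) : V := (om 0).1.1.
Definition S0 (om : Omega) : Prefs := (om 0).1.2.
Definition V1 (om : Omega) : V := (om 0).2.1.
Definition S1 (om : Omega) : Prefs := (om 0).2.2.

Section Dyn.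
Variable odot : seq V -> V * Prefs -> seq V.

Definition step (w : seq V) (om : Omega) : seq V :=
  odot (odot w (V0 om, S0 om)) (V1 om, S1 om).

Fixpoint Useq (Y : Omega -> seq V) (n : nat) (om : Omega) : seq V :=
  match n with
  | 0%N => Y om
  | n'.+1 => step (Useq Y n' om) (thetan n' om)
  end.

Definition Aset (Y : Omega -> seq V) (n : nat) : set Omega :=
  [set om | Useq Y n om = [::]].

End Dyn.

(* a seq-valued (discrete, countable codomain) random variable *)
Definition seq_rv (X : Omega -> seq V) : Prop :=
  forall w : seq V, measurable (X @^-1` [set w]).

End MatchingModel.

Arguments theta {V adj v0}.
Arguments thetainv {V adj v0}.
Arguments thetan {V adj v0}.
Arguments thetainvn {V adj v0}.
Arguments V0 {V adj v0}.
Arguments S0 {V adj v0}.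
Arguments V1 {V adj v0}.
Arguments S1 {V adj v0}.
Arguments step {V adj v0}.
Arguments Useq {V adj v0}.
Arguments Aset {V adj v0}.
Arguments seq_rv {V adj v0}.

From HB Require Import structures.
From mathcomp Require Import all_boot all_order all_algebra.
From mathcomp Require Import all_classical all_reals all_analysis.
From mathcomp Require Import zify.
Set Implicit Arguments. Unset Strict Implicit. Unset Printing Implicit Defensive.
Import Order.TTheory GRing.Theory Num.Theory.
Local Open Scope classical_set_scope.
Local Open Scope ring_scope.

(* Loynes-type backward coupling.  Call E_n the event of the hypothesis.  On
   theta^-n E_n, for every m >= n the chain started from Y at time -m and the
   chain started from Y at time -n are both empty at some common absolute time
   before 0; from then on they are driven by the same arrivals, so they agree
   at time 0: U^[Y]_m o theta^-m is constant for m >= n.  By stationarity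
   P(theta^-n E_n) = P(E_n) -> 1, hence the union of the theta^-n E_n has full
   probability, and U is the common value of the backward iterates there.  The
   recurrence U o theta = step U holds because theta^-(n+1) o theta = theta^-n. *)

Section Shift.
Variables (V : finType) (adj : rel V) (v0 : V).
Local Notation Om := (Omega adj v0).

Lemma thetanE n (om : Om) : thetan n om = fun k => om (k + n%:Z).
Proof.
elim: n => [|n IH]; apply: funext => k; first by rewrite addr0.
by rewrite /thetan iterS -/(thetan n om) IH /theta; f_equal; lia.
Qed.

Lemma thetainvnE n (om : Om) : thetainvn n om = fun k => om (k - n%:Z).
Proof.
elim: n => [|n IH]; apply: funext => k; first by rewrite subr0.
by rewrite /thetainvn iterS -/(thetainvn n om) IH /thetainv; f_equal; lia.
Qed.

Lemma thetainvnK n : cancel (@thetainvn _ adj v0 n) (thetan n).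
Proof. by move=> om; rewrite thetanE thetainvnE; apply: funext => k; f_equal; lia. Qed.

Lemma thetanK n : cancel (@thetan _ adj v0 n) (thetainvn n).
Proof. by move=> om; rewrite thetanE thetainvnE; apply: funext => k; f_equal; lia. Qed.

Lemma thetaK : cancel (@theta _ adj v0) thetainv.
Proof. by move=> om; apply: funext => k; rewrite /thetainv /theta; f_equal; lia. Qed.

Lemma thetainvnS_theta n (om : Om) : thetainvn n.+1 (theta om) = thetainvn n om.
Proof. by rewrite /thetainvn iterSr thetaK. Qed.

Lemma measurable_cylinder (n : int) (x : Arr adj) : measurable [set om : Om | om n = x].
Proof. by apply: sub_sigma_algebra; exists n, x. Qed.

Lemma measurable_thetainv : measurable_fun setT (@thetainv _ adj v0).
Proof.
apply: (@measurability _ _ Om Om setT _ (@cyl _ adj v0) erefl) => _ [_ [n [x ->]] <-].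
by rewrite setTI; exact: (measurable_cylinder (n - 1) x).
Qed.

Lemma measurable_thetainvn n : measurable_fun setT (@thetainvn _ adj v0 n).
Proof.
elim: n => [|n IH]; first exact: measurable_id.
exact: measurableT_comp measurable_thetainv IH.
Qed.

Lemma measure_preimage_thetainvn (R : realType) (mu : {measure set Om -> \bar R}) :
  (forall A, measurable A -> mu (theta @^-1` A) = mu A) ->
  forall n A, measurable A -> mu (thetainvn n @^-1` A) = mu A.
Proof.
move=> mu_theta; elim=> [//|n IH] A mA.
have mA' : measurable (thetainv @^-1` A).
  by rewrite -[X in measurable X]setTI; exact: measurable_thetainv.
rewrite (_ : thetainvn n.+1 @^-1` A = thetainvn n @^-1` (thetainv @^-1` A)) //.
rewrite IH // -(mu_theta _ mA'); congr (mu _).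
by apply/seteqP; split => om /=; rewrite thetaK.
Qed.

End Shift.

Definition level_measurable (d : measure_display) (T : measurableType d)
    (C : countType) (X : T -> C) : Prop :=
  forall c, measurable (X @^-1` [set c]).

Section LevelMeasurable.
Context (d d' : measure_display) (T : measurableType d) (T' : measurableType d').

Lemma level_measurable2 (C1 C2 C3 : countType) (g : C1 -> C2 -> C3)
    (X1 : T -> C1) (X2 : T -> C2) :
  level_measurable X1 -> level_measurable X2 ->
  level_measurable (fun t => g (X1 t) (X2 t)).
Proof.
move=> mX1 mX2 c.
pose S (i : nat) : set T := if unpickle i is Some (a, b) then
  if g a b == c then X1 @^-1` [set a] `&` X2 @^-1` [set b] else set0 else set0.
have -> : (fun t => g (X1 t) (X2 t)) @^-1` [set c] = \bigcup_i S i.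
  apply/seteqP; split => t /=.
    by move=> gc; exists (pickle (X1 t, X2 t)) => //; rewrite /S pickleK gc eqxx.
  move=> [i _]; rewrite /S; case: (unpickle i) => // -[a b].
  by case: eqP => // <- [/= -> ->].
apply: bigcupT_measurable => i; rewrite /S; case: (unpickle i) => // -[a b].
by case: eqP => _ //; apply: measurableI.
Qed.

Lemma level_measurable_comp (C : countType) (X : T' -> C) (f : T -> T') :
  measurable_fun setT f -> level_measurable X -> level_measurable (X \o f).
Proof. by move=> mf mX c; rewrite -[X in measurable X]setTI; exact: mf measurableT _ (mX c). Qed.

End LevelMeasurable.

Lemma prob1_ae (d : measure_display) (T : measurableType d) (R : realType)
    (P : probability T R) (A : set T) (Q : T -> Prop) :
  measurable A -> P A = 1%E -> (forall x, A x -> Q x) -> {ae P, forall x, Q x}.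
Proof.
move=> mA PA AQ; exists (~` A); split; first exact: measurableC.
  by rewrite probability_setC // PA subee.
by move=> x /= nQ Ax; apply: nQ; exact: AQ.
Qed.

Section Dynamics.
Variables (V : finType) (adj : rel V) (v0 : V) (odot : seq V -> V * Prefs adj -> seq V).
Local Notation Om := (Omega adj v0).

Definition arr_step (w : seq V) (a : Arr adj) : seq V := odot (odot w a.1) a.2.

Lemma UseqS (Y : Om -> seq V) n om :
  Useq odot Y n.+1 om = arr_step (Useq odot Y n om) (om n%:Z).
Proof.
rewrite /= /step /arr_step /V0 /S0 /V1 /S1 thetanE add0r.
by case: (om n%:Z) => [[a b] [c d]].
Qed.

Lemma level_measurable_Useq (Y : Om -> seq V) n :
  level_measurable Y -> level_measurable (Useq odot Y n).
Proof.
move=> mY; elim: n => [//|n IH].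
have -> : Useq odot Y n.+1 = fun om => arr_step (Useq odot Y n om) (om n%:Z).
  by apply: funext => om; rewrite UseqS.
by apply: level_measurable2 IH _ => x; exact: measurable_cylinder.
Qed.

Lemma Useq_eq_shift (Y : Om -> seq V) a b (om1 om2 : Om) :
  Useq odot Y a om1 = Useq odot Y b om2 -> thetan a om1 = thetan b om2 ->
  forall j, Useq odot Y (a + j) om1 = Useq odot Y (b + j) om2.
Proof.
move=> eqU eq_theta; elim=> [|j IH]; first by rewrite !addn0.
rewrite !addnS /= IH; congr step.
by rewrite /thetan (addnC a) (addnC b) !iterD -/(thetan a om1) -/(thetan b om2) eq_theta.
Qed.

Definition coupling_event (Y : Om -> seq V) (n : nat) : set Om :=
  [set om | forall k : nat, exists l : nat, (l <= n)%N /\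
     Aset odot Y l om /\ (thetan k @` Aset odot Y (l + k)) om].

Lemma coupling_event_mono (Y : Om -> seq V) n m :
  (n <= m)%N -> coupling_event Y n `<=` coupling_event Y m.
Proof.
move=> le_nm om E k; have [l [le_ln El]] := E k.
by exists l; split => //; exact: leq_trans le_ln le_nm.
Qed.

Lemma measurable_coupling_event (Y : Om -> seq V) n :
  level_measurable Y -> measurable (coupling_event Y n).
Proof.
move=> mY.
pose F (k l : nat) : set Om := if (l <= n)%N then
  Aset odot Y l `&` thetainvn k @^-1` Aset odot Y (l + k) else set0.
have -> : coupling_event Y n = \bigcap_k \bigcup_l F k l.
  apply/seteqP; split => om /=.
    move=> E k _; have [l [le_ln [El [om' El' eq_om]]]] := E k.
    by exists l => //; rewrite /F le_ln; split => //=; rewrite -eq_om thetanK.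
  move=> E k; have [l _] := E k I; rewrite /F; case: ifP => // le_ln [El El'].
  by exists l; do 2!split => //; exists (thetainvn k om); rewrite ?thetainvnK.
apply: bigcapT_measurable => k; apply: bigcupT_measurable => l; rewrite /F.
case: ifP => _ //; apply: measurableI; first exact: level_measurable_Useq.
apply: (level_measurable_comp (measurable_thetainvn k)).
exact: level_measurable_Useq.
Qed.

Lemma coupling_event_Useq (Y : Om -> seq V) n (om : Om) :
  coupling_event Y n (thetainvn n om) ->
  forall m, (n <= m)%N -> Useq odot Y m (thetainvn m om) = Useq odot Y n (thetainvn n om).
Proof.
move=> E m le_nm; have [l [le_ln [El [om' El' eq_om']]]] := E (m - n)%N.
have -> : thetainvn m om = om'.
  by rewrite -(thetanK (m - n) om') eq_om' /thetainvn -iterD subnK.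
have eqU : Useq odot Y (l + (m - n)) om' = Useq odot Y l (thetainvn n om).
  by move: El El'; rewrite /Aset /= => -> ->.
have eq_theta : thetan (l + (m - n)) om' = thetan l (thetainvn n om).
  by rewrite /thetan iterD -/(thetan (m - n) om') eq_om'.
have := Useq_eq_shift eqU eq_theta (n - l).
have -> : (l + (m - n) + (n - l) = m)%N by lia.
by rewrite subnKC.
Qed.

Section Words.
Hypotheses (adj_sym : symmetric adj) (adj_irr : irreflexive adj).
Hypothesis odot_adm : admissible odot.

Lemma inW_sub (w w' : seq V) : {subset w' <= w} -> inW adj w -> inW adj w'.
Proof.
move=> sub_w' w_W i j adj_ij.
by case: (w_W i j adj_ij) => /count_memPn nw; [left|right];
  apply/count_memPn; apply: contra nw; exact: sub_w'.
Qed.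

Lemma inW_rcons (w : seq V) v : ~~ has (adj v) w -> inW adj w -> inW adj (rcons w v).
Proof.
move=> /hasPn no_nbr w_W i j adj_ij.
have count_rcons x : count_mem x (rcons w v) = (count_mem x w + (v == x))%N.
  by rewrite -cats1 count_cat /= addn0.
have absent x : adj v x -> count_mem x w = 0%N.
  by move=> adj_vx; apply/count_memPn; apply: contraL adj_vx; exact: no_nbr.
rewrite !count_rcons; case: (eqVneq v i) adj_ij => [<-|_] adj_ij.
  right; rewrite absent // (negbTE (_ : v != j)) //.
  by apply: contraTneq adj_ij => <-; rewrite adj_irr.
case: (eqVneq v j) adj_ij => [<-|_] adj_ij; last by rewrite !addn0; exact: w_W.
by left; rewrite addn0 absent // adj_sym.
Qed.

Lemma inW_odot w v s : inW adj w -> inW adj (odot w (v, s)).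
Proof.
move=> w_W; have [free matched] := @odot_adm w v s w_W.
case: (boolP (has (adj v) w)) => [/matched [k _ [_ ->]]|/[dup] /free -> no_nbr].
  by apply: inW_sub w_W => x; rewrite mem_cat => /orP [/mem_take|/mem_drop].
exact: inW_rcons.
Qed.

Lemma odd_size_odot w v s : inW adj w -> odd (size (odot w (v, s))) = ~~ odd (size w).
Proof.
move=> w_W; have [free matched] := @odot_adm w v s w_W.
case: (boolP (has (adj v) w)) => [/matched [k lt_kw [_ ->]]|/free ->].
  rewrite size_cat size_take lt_kw size_drop.
  have -> : (k + (size w - k.+1) = (size w).-1)%N by lia.
  by case: (size w) lt_kw => // p _; rewrite /= negbK.
by rewrite size_rcons.
Qed.

Lemma inW2_step w (om : Om) : inW2 adj w -> inW2 adj (step odot w om).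
Proof.
move=> [w_W even_w]; have w1_W := inW_odot (V0 om) (S0 om) w_W.
split; first exact: inW_odot.
by rewrite odd_size_odot // odd_size_odot // negbK.
Qed.

Lemma inW2_Useq (Y : Om -> seq V) n om :
  (forall om, inW2 adj (Y om)) -> inW2 adj (Useq odot Y n om).
Proof. by move=> Y_W2; elim: n => [|n IH] //=; apply: inW2_step. Qed.

End Words.

End Dynamics.

Section BackwardLimit.
Variables (R : realType) (V : finType) (adj : rel V) (v0 : V).
Variables (odot : seq V -> V * Prefs adj -> seq V) (P : probability (Omega adj v0) R).
Variable Y : Omega adj v0 -> seq V.
Hypothesis Y_meas : level_measurable Y.
Local Notation Om := (Omega adj v0).

Definition coupled_at (n : nat) : set Om := thetainvn n @^-1` coupling_event odot Y n.

Definition coupled : set Om := \bigcup_n coupled_at n.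

Lemma measurable_coupled_at n : measurable (coupled_at n).
Proof.
rewrite -[X in measurable X]setTI.
rewrite /coupled_at; apply: (measurable_thetainvn n) => //.
exact: measurable_coupling_event.
Qed.

Lemma measurable_coupled : measurable coupled.
Proof. exact: bigcupT_measurable measurable_coupled_at. Qed.

Lemma coupled_at_theta n om : coupled_at n om -> coupled_at n.+1 (theta om).
Proof.
move=> cn; have := coupling_event_mono (leqnSn n) cn.
by rewrite -(thetainvnS_theta n om).
Qed.

Lemma probability_coupled :
  (forall A, measurable A -> P (theta @^-1` A) = P A) ->
  (fun n => P (coupling_event odot Y n)) @ \oo --> 1%E -> P coupled = 1%E.
Proof.
move=> P_stationary coupling_cvg; apply/eqP.
rewrite eq_le probability_le1 /=; last exact: measurable_coupled.
apply: (cvge_to_le coupling_cvg); apply: nearW => n.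
rewrite -(measure_preimage_thetainvn P_stationary n (measurable_coupling_event odot n Y_meas)).
have sub_coupled : coupled_at n `<=` coupled by move=> om cn; exists n.
by apply: le_measure sub_coupled; rewrite inE;
  [exact: measurable_coupled_at | exact: measurable_coupled].
Qed.

Definition Ulim (om : Om) : seq V :=
  if pselect (exists n, coupled_at n om) is left h
  then Useq odot Y (projT1 (cid h)) (thetainvn (projT1 (cid h)) om) else [::].

Lemma UlimE n om : coupled_at n om -> Ulim om = Useq odot Y n (thetainvn n om).
Proof.
move=> cn; rewrite /Ulim; case: pselect => [h|]; last by case; exists n.
case: (cid h) => n' cn' /=.
by rewrite -(coupling_event_Useq cn' (leq_maxl n' n)) (coupling_event_Useq cn (leq_maxr n' n)).
Qed.

Lemma Ulim_uncoupled om : ~ coupled om -> Ulim om = [::].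
Proof. by move=> nc; rewrite /Ulim; case: pselect => // -[n cn]; case: nc; exists n. Qed.

Lemma level_measurable_Ulim : level_measurable Ulim.
Proof.
move=> w.
have -> : Ulim @^-1` [set w] = (\bigcup_n (coupled_at n `&`
    (Useq odot Y n \o thetainvn n) @^-1` [set w])) `|`
    (if w == [::] then ~` coupled else set0).
  apply/seteqP; split => om /=.
    move=> <-; case: (pselect (coupled om)) => [[n _ cn]|nc].
      by left; exists n => //; split => //; rewrite /preimage /= -(UlimE cn).
    by right; rewrite (Ulim_uncoupled nc) eqxx.
  case=> [[n _ [cn <-]]|]; first exact: UlimE.
  by case: eqP => // -> nc; exact: Ulim_uncoupled.
apply: measurableU.
  apply: bigcupT_measurable => n; apply: measurableI; first exact: measurable_coupled_at.
  exact: (level_measurable_comp (measurable_thetainvn n) (level_measurable_Useq odot n Y_meas) w).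
by case: eqP => _ //; apply: measurableC measurable_coupled.
Qed.

Lemma inW2_Ulim om : symmetric adj -> irreflexive adj -> admissible odot ->
  (forall om, inW2 adj (Y om)) -> inW2 adj (Ulim om).
Proof.
move=> adj_sym adj_irr odot_adm Y_W2.
case: (pselect (coupled om)) => [[n _ cn]|nc]; first by rewrite (UlimE cn); exact: inW2_Useq.
by rewrite Ulim_uncoupled //; split => // i j _; left.
Qed.

Lemma Ulim_theta om : coupled om -> Ulim (theta om) = step odot (Ulim om) om.
Proof.
move=> [n _ cn]; rewrite (UlimE (coupled_at_theta cn)) (UlimE cn).
by rewrite thetainvnS_theta /= thetainvnK.
Qed.

Lemma Ulim_backward om : coupled om ->
  exists N, forall n, (N <= n)%N -> Useq odot Y n (thetainvn n om) = Ulim om.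
Proof. by move=> [N _ cN]; exists N => n le_Nn; rewrite (coupling_event_Useq cN le_Nn) -(UlimE cN). Qed.

End BackwardLimit.

Unset Implicit Arguments.

Theorem mainTheorem12 (R : realType) (V : finType) (adj : rel V) (v0 : V)
  (odot : seq V -> V * Prefs adj -> seq V) (nu : Prefs adj -> R)
  (P : probability (Omega adj v0) R) (Y : Omega adj v0 -> seq V) :
  (* finite connected simple graph *)
  symmetric adj -> irreflexive adj -> (forall x y, connect adj x y) ->
  (* admissible policy *)
  admissible odot ->
  (* (H1') stationarity and ergodicity under the theta *)
  (forall A : set (Omega adj v0), measurable A -> P (theta @^-1` A) = P A) ->
  (forall A : set (Omega adj v0), measurable A -> theta @^-1` A = A -> P A = 0%E \/ P A = 1%E) ->
  (* preference lists have law nu_phi *)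
  (forall s, P [set om : Omega adj v0 | S0 om = s] = (nu s)%:E) ->
  (forall s, P [set om : Omega adj v0 | S1 om = s] = (nu s)%:E) ->
  (* mu = (mu^0 + mu^1)/2 has full support *)
  (forall v, (0 < P [set om : Omega adj v0 | V0 om = v] + P [set om : Omega adj v0 | V1 om = v])%E) ->
  (* Y is a W_2-valued random variable *)
  seq_rv Y -> (forall om, inW2 adj (Y om)) ->
  (* the coupling condition *)
  (fun n : nat => P [set om : Omega adj v0 | forall k : nat, exists l : nat, (l <= n)%N /\
       Aset odot Y l om /\ (thetan k @` Aset odot Y (l + k)) om])
     @ \oo --> 1%E ->
  exists U : Omega adj v0 -> seq V,
    seq_rv U /\ (forall om, inW2 adj (U om)) /\
    {ae P, forall om : Omega adj v0, U (theta om) = step odot (U om) om} /\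
    {ae P, forall om : Omega adj v0, exists N : nat, forall n : nat, (N <= n)%N ->
        Useq odot Y n (thetainvn n om) = U om}.
Proof.
move=> adj_sym adj_irr _ odot_adm P_stationary _ _ _ _ Y_meas Y_W2 coupling_cvg.
have P_coupled := probability_coupled Y_meas P_stationary coupling_cvg.
have meas_coupled := measurable_coupled odot Y_meas.
exists (Ulim odot Y); split; first exact: level_measurable_Ulim.
split; first by move=> om; exact: inW2_Ulim.
split; apply: (prob1_ae meas_coupled P_coupled).
- exact: Ulim_theta.
- exact: Ulim_backward.
Qed.
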